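(* Let $C\subseteq\mathbb{F}_2^n$ be a binary linear constant weight code of dimension $k\ge2$. Then $\mathrm{PAut}(C)\cong S_3$ if and only if $k=2$, the weight of $C$ is $2$, and $n\in\{3,4\}$.
   Context: A binary linear constant weight code of weight $w$ is an $\mathbb{F}_2$-subspace of $\mathbb{F}_2^n$ all of whose non-zero vectors have exactly $w$ coordinates equal to $1$. $S_n$ acts on $\mathbb{F}_2^n$ by $\sigma(v_1,\dots,v_n)=(v_{\sigma^{-1}(1)},\dots,v_{\sigma^{-1}(n)})$, and $\mathrm{PAut}(C)=\{\sigma\in S_n:\sigma(C)=C\}$. *)

From HB Require Import structures.
From mathcomp Require Import all_boot all_order all_algebra all_fingroup.
Set Implicit Arguments. Unset Strict Implicit. Unset Printing Implicit Defensive.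
Import GRing.Theory.
Local Open Scope ring_scope.

Definition wt (n : nat) (v : 'rV['F_2]_n) : nat := #|[set i | v 0 i != 0]|.

Definition constant_weight (n : nat) (C : {vspace 'rV['F_2]_n}) (w : nat) : Prop :=
  forall v : 'rV['F_2]_n, v \in C -> v != 0 -> wt v = w.

Definition permv (n : nat) (s : 'S_n) (v : 'rV['F_2]_n) : 'rV['F_2]_n :=
  \row_i v 0 (s^-1 i)%g.

Definition PAut (n : nat) (C : {vspace 'rV['F_2]_n}) : {set 'S_n} :=
  [set s : 'S_n | [set permv s v | v in C] == [set v | v \in C]].

From HB Require Import structures.
From mathcomp Require Import all_boot all_order all_algebra all_fingroup.
From mathcomp Require Import zify ring.
Set Implicit Arguments. Unset Strict Implicit. Unset Printing Implicit Defensive.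
Import GRing.Theory.
Local Open Scope ring_scope.

(* Let g_1, ..., g_n in F_2^k be the columns of a generator matrix of C.  Summing the
   characters x |-> (-1)^(x.c) of F_2^k shows that constant weight w forces each nonzero
   c to occur exactly 2w/2^k times among the g_i, and 0 to occur n - (2^k - 1) 2w/2^k
   times.  The column multiset is therefore invariant under GL_k(F_2), so every invertible
   B is induced by a permutation of the columns, uniquely modulo permutations fixing every
   column: |GL_k(F_2)| <= |PAut C|, and twice that if some column is repeated.
   If |PAut C| = 6 then k = 2 (|GL_k(F_2)| > 6 for k >= 3) and no column repeats, so
   w = 2 and there are n - 3 <= 1 zero columns.  Conversely, for n = 3 the bound
   |GL_2(F_2)| = 6 fills S_3, and for n = 4 PAut C is the stabiliser of the unique zero
   column, a copy of S_3. *)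

Lemma F2_cases (a : 'F_2) : a = 0 \/ a = 1.
Proof. by case: a => [[|[|//]] Ha]; [left | right]; apply: val_inj. Qed.

Lemma pchar_F2 : 2%N \in [pchar 'F_2].
Proof. exact: pchar_Fp. Qed.

Lemma oppF2_mx m p (A : 'M['F_2]_(m, p)) : - A = A.
Proof. by apply/matrixP => i j; rewrite mxE oppr_pchar2 // pchar_F2. Qed.

Definition sgnF2 (a : 'F_2) : int := if a == 0 then 1 else -1.

Lemma sgnF2D a b : sgnF2 (a + b) = sgnF2 a * sgnF2 b.
Proof.
by case: (F2_cases a) => ->; case: (F2_cases b) => ->;
  rewrite ?addrr_pchar2 ?pchar_F2 ?addr0 ?add0r.
Qed.

Lemma sgnF2E a : sgnF2 a = 1 - 2 * (a != 0)%:R.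
Proof. by rewrite /sgnF2; case: (a == 0). Qed.

Definition dot m (x c : 'rV['F_2]_m) : 'F_2 := (x *m c^T) 0 0.

Lemma dotDl m (x y c : 'rV['F_2]_m) : dot (x + y) c = dot x c + dot y c.
Proof. by rewrite /dot mulmxDl mxE. Qed.

Lemma dotDr m (x c d : 'rV['F_2]_m) : dot x (c + d) = dot x c + dot x d.
Proof. by rewrite /dot linearD mulmxDr mxE. Qed.

Lemma dot0l m (c : 'rV['F_2]_m) : dot 0 c = 0.
Proof. by rewrite /dot mul0mx mxE. Qed.

Lemma dot0r m (x : 'rV['F_2]_m) : dot x 0 = 0.
Proof. by rewrite /dot trmx0 mulmx0 mxE. Qed.

Lemma dot_mulmxr m (x c : 'rV['F_2]_m) (B : 'M['F_2]_m) :
  dot x (c *m B) = dot (x *m B^T) c.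
Proof. by rewrite /dot trmx_mul mulmxA. Qed.

Lemma dot_deltal m (j : 'I_m) (c : 'rV['F_2]_m) : dot (delta_mx 0 j) c = c 0 j.
Proof.
rewrite /dot mxE (bigD1 j) //= big1 ?addr0 => [|i /negbTE nij].
  by rewrite !mxE !eqxx mul1r.
by rewrite mxE eqxx nij mul0r.
Qed.

Lemma sum_sgnF2_dot m (c : 'rV['F_2]_m) :
  \sum_(x : 'rV['F_2]_m) sgnF2 (dot x c) = if c == 0 then (2 ^ m)%:R else 0.
Proof.
have [->|c_nz] := eqVneq c 0.
  under eq_bigr do rewrite dot0r.
  by rewrite sumr_const card_mx card_Fp // mul1n.
have [j cj] : exists j, c 0 j != 0.
  apply/existsP; apply: contraR c_nz; rewrite negb_exists => /forallP c0.
  by apply/eqP/rowP => j; rewrite mxE; apply/eqP/negPn.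
have cj1 : c 0 j = 1 by case: (F2_cases (c 0 j)) cj => ->.
set S := \sum_x _.
(* Translating [x] by [e_j] negates every term. *)
have S_opp : S = - S.
  rewrite {1}/S (reindex_inj (addrI (delta_mx 0 j))) /= -sumrN.
  by apply: eq_bigr => x _; rewrite dotDl dot_deltal cj1 sgnF2D mulN1r.
lia.
Qed.

Lemma row_nz_exists m : (0 < m)%N -> exists c : 'rV['F_2]_m, c != 0.
Proof.
move=> m_gt0; exists (delta_mx 0 (Ordinal m_gt0)).
by apply/eqP => /rowP /(_ (Ordinal m_gt0)) /eqP; rewrite !mxE !eqxx oner_eq0.
Qed.

Section GeneratorMatrix.
Variables (n : nat) (C : {vspace 'rV['F_2]_n}).
Local Notation k := (\dim C).

Definition gen_col (i : 'I_n) : 'rV['F_2]_k := \row_j ((vbasis C)`_j) 0 i.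

Definition encode (x : 'rV['F_2]_k) : 'rV['F_2]_n :=
  \sum_j x 0 j *: (vbasis C)`_j.

Lemma encode_entry x i : encode x 0 i = dot x (gen_col i).
Proof. by rewrite /encode /dot summxE mxE; apply: eq_bigr => j _; rewrite !mxE. Qed.

Lemma encode_mem x : encode x \in C.
Proof.
apply: rpred_sum => j _; apply/rpredZ/vbasis_mem.
by apply: mem_nth; rewrite size_tuple.
Qed.

Lemma encode_coord v : v \in C -> v = encode (\row_j coord (vbasis C) j v).
Proof. by move/coord_vbasis => {1}->; apply: eq_bigr => j _; rewrite mxE. Qed.

Lemma encodeB x y : encode (x - y) = encode x - encode y.
Proof. by rewrite /encode -sumrB; apply: eq_bigr => j _; rewrite !mxE scalerBl. Qed.

Lemma encode_eq0 x : (encode x == 0) = (x == 0).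
Proof.
apply/eqP/eqP => [ex0 | ->]; last by rewrite /encode big1 // => j _; rewrite mxE scale0r.
apply/rowP => j; rewrite mxE.
by have /freeP/(_ (fun j => x 0 j) ex0 j) := basis_free (vbasisP C).
Qed.

Lemma encode_inj : injective encode.
Proof. by move=> x y exy; apply/eqP; rewrite -subr_eq0 -encode_eq0 encodeB exy subrr. Qed.

Lemma sum_sgnF2_gen_col x :
  \sum_i sgnF2 (dot x (gen_col i)) = n%:R - 2 * (wt (encode x))%:R.
Proof.
under eq_bigr do rewrite sgnF2E.
rewrite sumrB sumr_const card_ord -mulr_sumr /wt -sum1_card.
rewrite natr_sum [in RHS]big_mkcond /=; congr (_ - 2 * _); apply: eq_bigr => i _.
by rewrite inE encode_entry; case: (_ != 0).
Qed.

Definition colmult (c : 'rV['F_2]_k) : nat := #|[set i | gen_col i == c]|.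

End GeneratorMatrix.

Arguments encode {n} C x.
Arguments colmult {n} C c.

Lemma wt_eq0 m (v : 'rV['F_2]_m) : wt v = 0%N -> v = 0.
Proof.
move/eqP; rewrite cards_eq0 => /eqP v0; apply/rowP => i; rewrite mxE.
by apply/eqP/negPn/negP => vi; have := in_set0 i; rewrite -v0 inE vi.
Qed.

Section ConstantWeight.
Variables (n : nat) (C : {vspace 'rV['F_2]_n}) (w : nat).
Hypothesis Hcw : constant_weight C w.
Local Notation k := (\dim C).

Lemma wt_encode x : x != 0 -> wt (encode C x) = w.
Proof. by move=> x_nz; apply: Hcw; rewrite ?encode_mem ?encode_eq0. Qed.

(* [2^k [g_i = c] = \sum_x (-1)^(x.(g_i + c))]; after exchanging the sums, the sum over
   [i] is [n - 2 wt(x G)], which constant weight makes independent of [x != 0]. *)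
Lemma colmult_count c :
  ((2 ^ k * colmult C c)%N%:R : int)
  = (n%:R - 2 * w%:R) * (if c == 0 then (2 ^ k)%:R else 0) + 2 * w%:R.
Proof.
have -> : ((2 ^ k * colmult C c)%N%:R : int)
          = \sum_i \sum_x sgnF2 (dot x (gen_col C i + c)).
  under eq_bigr do rewrite sum_sgnF2_dot addr_eq0 oppF2_mx.
  rewrite -big_mkcond sumr_const /colmult natrM -[RHS]mulr_natr; congr (_ * _%:R).
  by apply: eq_card => i; rewrite inE.
rewrite exchange_big /=.
under eq_bigr do (under eq_bigr do rewrite dotDr sgnF2D mulrC;
  rewrite -mulr_sumr sum_sgnF2_gen_col).
have enc0 : wt (encode C 0) = 0%N.
  by apply/eqP; rewrite cards_eq0; apply/eqP/setP => i; rewrite !inE encode_entry dot0l eqxx.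
rewrite (bigD1 0) //= dot0l enc0.
under eq_bigr => x x_nz do rewrite wt_encode //.
have Sc : \sum_(x | x != 0) sgnF2 (dot x c) = (if c == 0 then (2 ^ k)%:R else 0) - 1.
  by rewrite -sum_sgnF2_dot [in RHS](bigD1 0) //= dot0l addrC addrK.
rewrite -mulr_suml Sc /sgnF2 eqxx; ring.
Qed.

Lemma colmult_nz c : c != 0 -> (2 ^ k * colmult C c = 2 * w)%N.
Proof. by move=> c_nz; have := colmult_count c; rewrite (negbTE c_nz) mulr0 add0r; lia. Qed.

Lemma colmult0 : (2 ^ k * colmult C 0 + 2 ^ k * (2 * w) = 2 ^ k * n + 2 * w)%N.
Proof. by have := colmult_count 0; rewrite eqxx; lia. Qed.

Lemma weight_gt0 : (0 < k)%N -> (0 < w)%N.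
Proof.
case/row_nz_exists => x x_nz; rewrite -(wt_encode x_nz) lt0n.
by apply: contra x_nz => /eqP/wt_eq0/eqP; rewrite encode_eq0.
Qed.

End ConstantWeight.

Lemma permvM n (s t : 'S_n) v : permv (s * t)%g v = permv t (permv s v).
Proof. by apply/rowP => i; rewrite !mxE invMg permM. Qed.

Lemma permv1 n v : permv (1%g : 'S_n) v = v.
Proof. by apply/rowP => i; rewrite !mxE invg1 perm1. Qed.

Lemma permv_inj n (s : 'S_n) : injective (permv s).
Proof.
move=> u v /rowP /(_ (s _)) uv; apply/rowP => i.
by have := uv i; rewrite !mxE permK.
Qed.

(* Since [permv s] is injective, [s] maps [C] onto [C] as soon as it maps [C] into [C]. *)
Lemma PAutP n (C : {vspace 'rV['F_2]_n}) s :
  reflect {in C, forall v, permv s v \in C} (s \in PAut C).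
Proof.
rewrite inE; apply: (iffP eqP) => [sC v vC | sC].
  by have := imset_f (permv s) vC; rewrite sC inE.
apply/eqP; rewrite eqEcard card_in_imset; last by move=> u v _ _; apply: permv_inj.
apply/andP; split; last by apply: subset_leq_card; apply/subsetP => v; rewrite inE.
by apply/subsetP => u /imsetP [v vC ->]; rewrite inE sC.
Qed.

Lemma PAut_group_set n (C : {vspace 'rV['F_2]_n}) : group_set (PAut C).
Proof.
apply/group_setP; split; first by apply/PAutP => v; rewrite permv1.
move=> s t /PAutP sC /PAutP tC; apply/PAutP => v vC.
by rewrite permvM tC // sC.
Qed.

Canonical PAut_group n (C : {vspace 'rV['F_2]_n}) := group (PAut_group_set C).

Lemma count_mktuple (T : eqType) m (f : 'I_m -> T) (a : pred T) :
  count a [tuple f i | i < m] = #|[set i | a (f i)]|.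
Proof. by rewrite /= -sum1_count big_map big_enum_cond /= sum1_card cardsE. Qed.

Section Realization.
Variables (n : nat) (C : {vspace 'rV['F_2]_n}).
Local Notation k := (\dim C).

Definition realizes (s : 'S_n) (B : 'M['F_2]_k) :=
  [forall i, gen_col C (s^-1 i)%g == gen_col C i *m B].

Lemma realizesM s t A B : realizes s A -> realizes t B -> realizes (s * t) (B *m A).
Proof.
move=> /forallP sA /forallP tB; apply/forallP => i.
by rewrite invMg permM (eqP (sA _)) (eqP (tB _)) mulmxA.
Qed.

Lemma permv_encode s B x : realizes s B -> permv s (encode C x) = encode C (x *m B^T).
Proof.
move/forallP => sB; apply/rowP => i.
by rewrite mxE !encode_entry (eqP (sB i)) dot_mulmxr.
Qed.

Lemma realizes_PAut s B : realizes s B -> s \in PAut C.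
Proof.
move=> sB; apply/PAutP => v /encode_coord ->.
by rewrite (permv_encode _ sB) encode_mem.
Qed.

Lemma realizes_uniq s B B' : realizes s B -> realizes s B' -> B = B'.
Proof.
move=> sB sB'; apply/trmx_inj/row_matrixP => j.
have := permv_encode (delta_mx 0 j) sB; rewrite (permv_encode _ sB') => /encode_inj.
by rewrite -!rowE.
Qed.

Variable w : nat.
Hypothesis Hcw : constant_weight C w.

Lemma colmult_mulmx B c : B \in unitmx -> colmult C (c *m B) = colmult C c.
Proof.
move=> B_unit; have [->|c_nz] := eqVneq c 0; first by rewrite mul0mx.
apply/eqP; rewrite -(eqn_pmul2l (expn_gt0 2 k)) !(colmult_nz Hcw) //.
by apply: contra c_nz => /eqP cB0; rewrite -(mulmxK B_unit c) cB0 mul0mx.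
Qed.

(* By [colmult_mulmx], the columns [g_i B] are a rearrangement of the columns [g_i]. *)
Lemma realizes_exists B : B \in unitmx -> exists s, realizes s B.
Proof.
move=> B_unit.
have : perm_eq [tuple gen_col C i *m B | i < n] [tuple gen_col C i | i < n].
  apply/allP => c _; apply/eqP; rewrite /= !count_mktuple.
  transitivity (colmult C (c *m invmx B)); last by rewrite colmult_mulmx ?unitmx_inv.
  by apply: eq_card => i; rewrite !inE -{1}(mulmxKV B_unit c) (can_eq (mulmxK B_unit)).
case/tuple_permP => p /val_inj gB.
exists p^-1%g; apply/forallP => i; rewrite invgK.
by have := congr1 (fun t => tnth t i) gB; rewrite !tnth_mktuple => ->.
Qed.

End Realization.

Arguments realizes {n} C s B.

Section AutomorphismCount.
Variables (n : nat) (C : {vspace 'rV['F_2]_n}) (w : nat).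
Hypothesis Hcw : constant_weight C w.
Local Notation k := (\dim C).
Local Notation GLk := [set B : 'M['F_2]_k | B \in unitmx].

Definition perm_of_mx (B : 'M['F_2]_k) : 'S_n := odflt 1%g [pick s | realizes C s B].

Lemma perm_of_mxP B : B \in unitmx -> realizes C (perm_of_mx B) B.
Proof.
move=> B_unit; rewrite /perm_of_mx; case: pickP => [s //|no_s].
by have [s sB] := realizes_exists Hcw B_unit; move: (no_s s); rewrite sB.
Qed.

Lemma card_unitmx_le_PAut : (#|GLk| <= #|PAut C|)%N.
Proof.
have inj : {in GLk &, injective perm_of_mx}.
  move=> B B'; rewrite !inE => B_unit B'_unit eqBB'.
  by apply: (realizes_uniq (perm_of_mxP B_unit)); rewrite eqBB' perm_of_mxP.
rewrite -(card_in_imset inj); apply/subset_leq_card/subsetP => s /imsetP [B].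
by rewrite inE => /perm_of_mxP sB ->; apply: realizes_PAut sB.
Qed.

(* A nontrivial permutation [t] fixing all columns doubles the bound: [B |-> t * perm_of_mx B]
   is a second injection of [GLk] into [PAut C], with image disjoint from the first. *)
Lemma card_unitmx_double_le_PAut t :
  t != 1%g -> realizes C t 1%:M -> (2 * #|GLk| <= #|PAut C|)%N.
Proof.
move=> t_nt t1.
pose h (p : bool * 'M['F_2]_k) := if p.1 then (t * perm_of_mx p.2)%g else perm_of_mx p.2.
have hP b B : B \in unitmx -> realizes C (h (b, B)) B.
  move=> B_unit; case: b; last exact: perm_of_mxP.
  by have := realizesM t1 (perm_of_mxP B_unit); rewrite mulmx1.
have t_fix B : (t * perm_of_mx B == perm_of_mx B)%g = false.
  by rewrite -{2}[perm_of_mx B]mul1g (can_eq (mulgK _)) (negbTE t_nt).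
have inj : {in setX [set: bool] GLk &, injective h}.
  move=> [b B] [b' B']; rewrite !inE => /andP [_ B_unit] /andP [_ B'_unit] hBB'.
  have eqBB' : B = B' by apply: (realizes_uniq (hP b B B_unit)); rewrite hBB'; exact: hP.
  subst B'; congr (_, _); clear B_unit B'_unit.
  case: b b' hBB' => [] [] //; rewrite /h /= => /eqP;
    by rewrite ?t_fix // eq_sym t_fix.
have -> : (2 * #|GLk| = #|setX [set: bool] GLk|)%N by rewrite cardsX cardsT card_bool.
rewrite -(card_in_imset inj).
apply/subset_leq_card/subsetP => s /imsetP [[b B]].
rewrite in_setX inE => /andP [_ B_unit] ->; apply: realizes_PAut (hP b B B_unit).
Qed.

Lemma colmult_le1 c : (#|PAut C| < 2 * #|GLk|)%N -> (colmult C c <= 1)%N.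
Proof.
rewrite ltnNge; apply: contraR; rewrite -ltnNge => /card_gt1P [i [j [ic jc ij]]].
apply: (card_unitmx_double_le_PAut (t := tperm i j)).
  by apply/eqP => /permP /(_ i) /eqP; rewrite tpermL perm1 eq_sym (negbTE ij).
move: ic jc; rewrite !inE => /eqP ic /eqP jc.
apply/forallP => l; rewrite tpermV mulmx1.
by case: tpermP => [->|->|] //; rewrite ic jc.
Qed.

End AutomorphismCount.

Section ZeroColumn.
Variables (n : nat) (C : {vspace 'rV['F_2]_n}).

Lemma gen_col_eq0P (i : 'I_n) :
  reflect {in C, forall v : 'rV['F_2]_n, v 0 i = 0} (gen_col C i == 0).
Proof.
apply: (iffP eqP) => [gi0 v /encode_coord -> | C0].
  by rewrite encode_entry gi0 dot0r.
apply/rowP => j; rewrite [RHS]mxE -dot_deltal -encode_entry.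
exact/C0/encode_mem.
Qed.

Lemma PAut_fix_zero_col s l :
  colmult C 0 = 1%N -> gen_col C l = 0 -> s \in PAut C -> s l = l.
Proof.
move=> /eqP/cards1P [l0 zero_cols] /eqP gl0 sC.
have gsl0 : gen_col C (s l) == 0.
  move/gen_col_eq0P: gl0 => C0; apply/gen_col_eq0P => v vC.
  have /PAutP/(_ v vC)/C0 := groupVr sC.
  by rewrite mxE invgK.
have : s l \in [set i | gen_col C i == 0] by rewrite inE.
by rewrite zero_cols inE => /eqP ->; apply/esym/set1P; rewrite -zero_cols inE.
Qed.

End ZeroColumn.

Section SymmetricGroup.
Local Open Scope group_scope.

Lemma card_perm_fix_le m (l : 'I_m.+1) : (#|[set s : 'S_m.+1 | s l == l]| <= m`!)%N.
Proof.
have -> : m`! = #|perm_on [set~ l]| by rewrite card_perm cardsC1 card_ord.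
apply/subset_leq_card/subsetP => s; rewrite !inE => /eqP sl.
by apply/subsetP => x; rewrite !inE; apply: contraNneq => ->; rewrite sl.
Qed.

Lemma perm_fix_isog m (l : 'I_m.+1) : [set s : 'S_m.+1 | s l == l] \isog [set: 'S_m].
Proof.
have liftM : {in [set: 'S_m] &, {morph lift_perm l l : x y / x * y}}.
  by move=> x y _ _; rewrite lift_permM.
have lift_inj : 'injm (Morphism liftM).
  apply/injmP => x y _ _ /= /permP exy; apply/permP => z.
  by apply: (@lift_inj _ l); rewrite -!(lift_perm_lift l l) exy.
suff <- : Morphism liftM @* [set: 'S_m] = [set s : 'S_m.+1 | s l == l].
  exact/isog_symr/sub_isog.
apply/eqP; rewrite eqEcard; apply/andP; split.
  by apply/subsetP => s /morphimP [x _ _ ->]; rewrite inE lift_perm_id.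
by rewrite card_injm // cardsT card_Sn card_perm_fix_le.
Qed.

Lemma isog_Sym_of_fix m (l : 'I_m.+1) (P : {set 'S_m.+1}) :
  {in P, forall s : 'S_m.+1, s l = l} -> (m`! <= #|P|)%N -> P \isog [set: 'S_m].
Proof.
move=> Pl Pcard; suff -> : P = [set s : 'S_m.+1 | s l == l] by apply: perm_fix_isog.
apply/eqP; rewrite eqEcard (leq_trans (card_perm_fix_le l) Pcard) andbT.
by apply/subsetP => s sP; rewrite inE Pl.
Qed.

Lemma isog_Sym_of_card m (P : {set 'S_m}) : (m`! <= #|P|)%N -> P \isog [set: 'S_m].
Proof.
move=> Pcard; suff -> : P = [set: 'S_m] by apply: isog_refl.
by apply/eqP; rewrite eqEcard subsetT cardsT card_Sn Pcard.
Qed.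

End SymmetricGroup.

Lemma card_unitmx_GL (F : finFieldType) k :
  #|[set B : 'M[F]_k.+1 | B \in unitmx]| = #|('GL_k.+1[F])%g|.
Proof. by rewrite cardsT /= card_sub; apply: eq_card => B; rewrite inE. Qed.

Lemma card_unitmx_F2_2 : #|[set B : 'M['F_2]_2 | B \in unitmx]| = 6%N.
Proof. by rewrite card_unitmx_GL card_GL_2 card_Fp. Qed.

Lemma card_unitmx_F2_gt6 k : (3 <= k)%N -> (6 < #|[set B : 'M['F_2]_k | B \in unitmx]|)%N.
Proof.
case: k => // k k_ge3; rewrite card_unitmx_GL card_GL // card_Fp //.
have bin_ge3 : (3 <= 'C(k.+1, 2))%N by apply: leq_trans (leq_bin2l 2 k_ge3).
have prod_gt0 : (0 < \prod_(1 <= i < k.+2) (2 ^ i - 1))%N.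
  rewrite big_nat; apply: prodn_cond_gt0 => i /andP [i_gt0 _].
  by rewrite subn_gt0 -{1}(expn0 2) ltn_exp2l.
apply: leq_trans (leq_pmulr _ prod_gt0).
by apply: (@leq_trans (2 ^ 3)); rewrite ?leq_exp2l.
Qed.

Section WeightAndLength.
Variables (n : nat) (C : {vspace 'rV['F_2]_n}) (w : nat).
Hypothesis Hcw : constant_weight C w.
Local Notation k := (\dim C).

Lemma colmult0_dim2 : k = 2%N -> w = 2%N -> (colmult C 0 + 3 = n)%N.
Proof.
move=> k2 w2; have := colmult0 Hcw; move: (colmult C 0) => z.
by rewrite k2 w2; lia.
Qed.

Lemma params_of_card_PAut6 : (2 <= k)%N -> #|PAut C| = 6%N ->
  k = 2%N /\ w = 2%N /\ (n = 3%N \/ n = 4%N).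
Proof.
move=> k_ge2 PAut6; have GL_le6 := card_unitmx_le_PAut Hcw; rewrite PAut6 in GL_le6.
have k2 : k = 2%N.
  apply/eqP; rewrite eqn_leq k_ge2 andbT leqNgt; apply/negP => /card_unitmx_F2_gt6.
  by rewrite ltnNge GL_le6.
have no_repeat c : (colmult C c <= 1)%N.
  by apply: (colmult_le1 Hcw); rewrite PAut6; move: GL_le6; rewrite k2 card_unitmx_F2_2.
have [e e_nz] := row_nz_exists (ltnW k_ge2).
have w_gt0 := weight_gt0 Hcw (ltnW k_ge2).
have := colmult_nz Hcw e_nz; have := no_repeat e; rewrite k2.
move: (colmult C e) => m m_le1 m_w.
have w2 : w = 2%N by lia.
have := colmult0_dim2 k2 w2; have := no_repeat 0; lia.
Qed.

End WeightAndLength.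

Theorem theorem5p8 (n : nat) (C : {vspace 'rV['F_2]_n}) (w : nat)
  (Hcw : constant_weight C w) (Hk : (2 <= \dim C)%N) :
  (PAut C \isog [set: 'S_3]) <-> (\dim C = 2%N /\ w = 2%N /\ (n = 3%N \/ n = 4%N)).
Proof.
split => [iso | [k2 [w2 n34]]].
  by apply: (params_of_card_PAut6 Hcw Hk); rewrite (card_isog iso) cardsT card_Sn.
have GL_le : (3`! <= #|PAut C|)%N.
  by have := card_unitmx_le_PAut Hcw; rewrite k2 card_unitmx_F2_2.
have z3 := colmult0_dim2 Hcw k2 w2.
case: n34 => n_eq; subst n; first exact: isog_Sym_of_card.
have /card_gt0P [l] : (0 < colmult C 0)%N by lia.
rewrite inE => /eqP l0.
apply: (isog_Sym_of_fix (l := l)) => // s sP.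
by apply: PAut_fix_zero_col sP => //; lia.
Qed.
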